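(* For every finite-dimensional Lie superalgebra $L$, $Z^{*}(L)=Z^{\wedge}(L)$. Consequently $L$ is capable if and only if $Z^{\wedge}(L)=0$.
   Context: All algebras are over a field $\mathbb{F}$ of characteristic $\neq 2,3$. A Lie superalgebra $L$ is capable if $L\cong H/Z(H)$ for some Lie superalgebra $H$. The epicenter $Z^{*}(L)$ is the smallest graded ideal $I$ of $L$ such that $L/I$ is capable. Non-abelian tensor square: $L\otimes L$ is the Lie superalgebra generated by symbols $x\otimes y$ ($x,y$ homogeneous, $|x\otimes y|=|x|+|y|$) subject to bilinearity, $[x,x']\otimes y=x\otimes[x',y]-(-1)^{|x||x'|}x'\otimes[x,y]$, $x\otimes[y,y']=(-1)^{|y'|(|x|+|y|)}[y',x]\otimes y-(-1)^{|x||y|}[y,x]\otimes y'$, and $[x\otimes y,x'\otimes y']=-(-1)^{|x||y|}[y,x]\otimes[x',y']$. The exterior square is $L\wedge L=(L\otimes L)/(L\square L)$, where $L\square L$ is the graded ideal generated by $x\otimes y+(-1)^{|x||y|}y\otimes x$ for homogeneous $x,y$ and by $x_0\otimes x_0$ for $x_0\in L_{\bar 0}$; the image of $x\otimes y$ is written $x\wedge y$. The exterior center is $Z^{\wedge}(L)=\{x\in L: x\wedge y=0 \text{ for all } y\in L\}$. *)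

From HB Require Import structures.
From mathcomp Require Import all_boot all_order all_algebra.
Set Implicit Arguments. Unset Strict Implicit. Unset Printing Implicit Defensive.
Import GRing.Theory.
Local Open Scope ring_scope.

(* (-1)^(b) for b : bool (used with b = a && b' to encode (-1)^{|x||y|}). *)
Definition ssgn (F : fieldType) (b : bool) : F := if b then -1 else 1.

(* A Lie superalgebra structure on the F-module V.
   ls_par false x  <->  x is homogeneous even  (x in L_0)
   ls_par true  x  <->  x is homogeneous odd   (x in L_1)
   Parities add in Z/2 = bool with xor (addb). *)
Record lieSuper (F : fieldType) (V : lmodType F) := LieSuper {
  ls_par : bool -> V -> Prop;
  ls_br : V -> V -> V;
  ls_par0 : forall b, ls_par b 0;
  ls_parD : forall b (a : F) x y, ls_par b x -> ls_par b y -> ls_par b (a *: x + y);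
  ls_decomp : forall x, exists x0 x1, [/\ ls_par false x0, ls_par true x1 & x = x0 + x1];
  ls_disj : forall x, ls_par false x -> ls_par true x -> x = 0;
  ls_brDl : forall (a : F) x y z, ls_br (a *: x + y) z = a *: ls_br x z + ls_br y z;
  ls_brDr : forall (a : F) x y z, ls_br z (a *: x + y) = a *: ls_br z x + ls_br z y;
  ls_br_par : forall a b x y, ls_par a x -> ls_par b y -> ls_par (addb a b) (ls_br x y);
  ls_skew : forall a b x y, ls_par a x -> ls_par b y ->
      ls_br x y = - (ssgn F (a && b) *: ls_br y x);
  ls_jacobi : forall a b c x y z, ls_par a x -> ls_par b y -> ls_par c z ->
      ssgn F (a && c) *: ls_br x (ls_br y z)
    + ssgn F (b && a) *: ls_br y (ls_br z x)
    + ssgn F (c && b) *: ls_br z (ls_br x y) = 0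
}.

Section Defs.
Variable F : fieldType.

Definition is_hom (V W : lmodType F) (L : lieSuper V) (M : lieSuper W) (f : V -> W) :=
  [/\ forall (a : F) x y, f (a *: x + y) = a *: f x + f y,
      forall b x, ls_par L b x -> ls_par M b (f x)
    & forall x y, f (ls_br L x y) = ls_br M (f x) (f y)].

Definition surj (V W : Type) (f : V -> W) := forall w, exists v, f v = w.

Definition center (V : lmodType F) (L : lieSuper V) (x : V) : Prop :=
  forall y, ls_br L x y = 0.

Definition graded_ideal (V : lmodType F) (L : lieSuper V) (I : V -> Prop) :=
  [/\ I 0,
      forall (a : F) x y, I x -> I y -> I (a *: x + y),
      forall x, I x -> exists x0 x1,
          [/\ I x0, I x1, ls_par L false x0, ls_par L true x1 & x = x0 + x1]
    & forall x y, I x -> I (ls_br L x y) /\ I (ls_br L y x)].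

(* L is capable: L = H / Z(H) for some Lie superalgebra H, i.e. there is a
   surjective homomorphism H -> L whose kernel is exactly Z(H). *)
Definition capable (V : lmodType F) (L : lieSuper V) : Prop :=
  exists (W : lmodType F) (H : lieSuper W) (f : W -> V),
    [/\ is_hom H L f, surj f & forall w, f w = 0 <-> center H w].

(* L / I is capable: some (equivalently, every) quotient of L by I, i.e.
   a surjective homomorphism out of L with kernel exactly I, has a capable
   target. *)
Definition capable_quot (V : lmodType F) (L : lieSuper V) (I : V -> Prop) : Prop :=
  exists (W : lmodType F) (Q : lieSuper W) (p : V -> W),
    [/\ is_hom L Q p, surj p, (forall x, p x = 0 <-> I x) & capable Q].

Definition is_epicenter (V : lmodType F) (L : lieSuper V) (I : V -> Prop) : Prop :=
  [/\ graded_ideal L I, capable_quot L I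
    & forall J, graded_ideal L J -> capable_quot L J -> forall x, I x -> J x].

(* Exterior pairings L x L -> M: the defining relations of the non-abelian
   tensor square together with those of L \square L, i.e. the relations
   presenting L /\ L (symbol x /\ y  |->  h x y). *)
Definition ext_pairing (V W : lmodType F) (L : lieSuper V) (M : lieSuper W)
    (h : V -> V -> W) : Prop :=
  [/\ forall (c : F) x x' y, h (c *: x + x') y = c *: h x y + h x' y,
      forall (c : F) x y y', h x (c *: y + y') = c *: h x y + h x y'
    & forall a b x y, ls_par L a x -> ls_par L b y -> ls_par M (addb a b) (h x y)]
  /\ [/\ forall a a' x x' y, ls_par L a x -> ls_par L a' x' ->
        h (ls_br L x x') y = h x (ls_br L x' y) - ssgn F (a && a') *: h x' (ls_br L x y),
      forall a b b' x y y', ls_par L a x -> ls_par L b y -> ls_par L b' y' ->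
        h x (ls_br L y y') = ssgn F (b' && addb a b) *: h (ls_br L y' x) y
                             - ssgn F (a && b) *: h (ls_br L y x) y',
      forall a b a' b' x y x' y', ls_par L a x -> ls_par L b y ->
        ls_par L a' x' -> ls_par L b' y' ->
        ls_br M (h x y) (h x' y') = - (ssgn F (a && b) *: h (ls_br L y x) (ls_br L x' y')),
      forall a b x y, ls_par L a x -> ls_par L b y ->
        h x y + ssgn F (a && b) *: h y x = 0
    & forall x, ls_par L false x -> h x x = 0].

(* x /\ y = 0 in the exterior square L /\ L (the presented Lie superalgebra):
   it vanishes under every exterior pairing into every Lie superalgebra. *)
Definition wedge_zero (V : lmodType F) (L : lieSuper V) (x y : V) : Prop :=
  forall (W : lmodType F) (M : lieSuper W) (h : V -> V -> W),
    ext_pairing L M h -> h x y = 0.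

Definition ext_center (V : lmodType F) (L : lieSuper V) (x : V) : Prop :=
  forall y, wedge_zero L x y.

End Defs.

(* The bracket of L is itself an exterior pairing (char <> 2 gives [x, x] = 0 for
   even x), so Z^/\(L) lies in the centre, and it is a graded ideal.

   If L/J ~= H/Z(H), then, the kernel of H -> L/J being Z(H), the bracket of H
   factors through L/J and defines an exterior pairing of L; so an element of
   Z^/\(L) lifts to a central element of H, i.e. lies in J.  With J = 0 this shows
   that a capable L has Z^/\(L) = 0.

   Conversely, products of exterior pairings are graded 2-cocycles, and in finite
   dimension finitely many exterior pairings cut out Z^/\(L): this gives a cocycle
   c : L x L -> W whose radical is exactly Z^/\(L).  The central extension
   H = L (+)_c W has Z(H) = Z^/\(L) (+) W, hence H/Z(H) ~= L/Z^/\(L) is capable. *)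

From HB Require Import structures.
From mathcomp Require Import all_boot all_order all_algebra.
From mathcomp Require Import ring zify.
From Stdlib Require Import Classical ClassicalEpsilon.
Import GRing.Theory.
Local Open Scope ring_scope.
Set Implicit Arguments. Unset Strict Implicit. Unset Printing Implicit Defensive.

Ltac sgn_tac := clear; repeat match goal with b : bool |- _ => case: b end;
  rewrite /ssgn /=; ring.

Section Signs.
Variables (F : fieldType) (W : lmodType F).

Lemma ssgnK (b : bool) (X : W) : ssgn F b *: (ssgn F b *: X) = X.
Proof. by rewrite scalerA -[X in _ = X]scale1r; congr (_ *: _); sgn_tac. Qed.

Lemma ssgn_solve (k k' : F) b (X Y Z : W) :
  k *: X + k' *: Y + ssgn F b *: Z = 0 ->
  Z = - (ssgn F b * k) *: X - (ssgn F b * k') *: Y.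
Proof.
move=> J; rewrite -[Z](ssgnK b); have -> : ssgn F b *: Z = - (k *: X + k' *: Y).
  by apply/eqP; rewrite -addr_eq0 addrC J.
by rewrite scalerN scalerDr !scalerA opprD !scaleNr.
Qed.

Lemma scale_eq2 (k1 k2 m1 m2 : F) (X Y : W) :
  k1 = m1 -> k2 = m2 -> k1 *: X + k2 *: Y = m1 *: X + m2 *: Y.
Proof. by move=> -> ->. Qed.

Lemma scale2_eq0 (k1 k2 : F) (X Y : W) : k1 = 0 -> k2 = 0 -> k1 *: X + k2 *: Y = 0.
Proof. by move=> -> ->; rewrite !scale0r addr0. Qed.
End Signs.

Section LinearMap.
Variables (F : fieldType) (U W : lmodType F) (f : U -> W).
Hypothesis f_lin : forall (a : F) x y, f (a *: x + y) = a *: f x + f y.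

Lemma lin0 : f 0 = 0.
Proof.
have e := f_lin 1 0 0; rewrite scale1r addr0 scale1r in e.
by apply: (@addrI _ (f 0)); rewrite addr0 -e.
Qed.

Lemma linD x y : f (x + y) = f x + f y.
Proof. by have := f_lin 1 x y; rewrite !scale1r. Qed.

Lemma linZ (a : F) x : f (a *: x) = a *: f x.
Proof. by have := f_lin a x 0; rewrite !addr0 lin0 addr0. Qed.

Lemma linN x : f (- x) = - f x.
Proof. by rewrite -scaleN1r linZ scaleN1r. Qed.

Lemma linB x y : f (x - y) = f x - f y.
Proof. by rewrite linD linN. Qed.
End LinearMap.

Record grading (F : fieldType) (W : lmodType F) (g : bool -> W -> Prop) : Prop := Grading {
  grading0 : forall b, g b 0;
  gradingP : forall b (a : F) x y, g b x -> g b y -> g b (a *: x + y);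
  grading_decomp : forall x, exists x0 x1, [/\ g false x0, g true x1 & x = x0 + x1];
  grading_disj : forall x, g false x -> g true x -> x = 0 }.

Section Grading.
Variables (F : fieldType) (W : lmodType F) (g : bool -> W -> Prop).
Hypothesis gg : grading g.

Lemma gradingZ b (a : F) x : g b x -> g b (a *: x).
Proof. by move=> gx; have := gradingP gg a gx (grading0 gg b); rewrite addr0. Qed.

Lemma gradingD b x y : g b x -> g b y -> g b (x + y).
Proof. by move=> gx gy; have := gradingP gg 1 gx gy; rewrite scale1r. Qed.

Lemma gradingB b x y : g b x -> g b y -> g b (x - y).
Proof. by move=> gx gy; apply: gradingD gx _; rewrite -scaleN1r; apply: gradingZ. Qed.

Lemma grading_disjN b x : g b x -> g (~~ b) x -> x = 0.
Proof. by case: b => gx gNx; [apply: grading_disj gNx gx | apply: grading_disj gx gNx]. Qed.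

Lemma grading_sum_eq0 b x y : g b x -> g (~~ b) y -> x + y = 0 -> x = 0 /\ y = 0.
Proof.
move=> gx gy xy0; have ex : x = - y by apply/eqP; rewrite -addr_eq0 xy0.
have x0 : x = 0 by apply: (grading_disjN gx); rewrite ex -scaleN1r; apply: gradingZ.
by split=> //; move: xy0; rewrite x0 add0r.
Qed.

Lemma grading_component b x0 x1 : g false x0 -> g true x1 -> g b (x0 + x1) ->
  x0 + x1 = if b then x1 else x0.
Proof.
move=> gx0 gx1; case: b => gx.
  suff -> : x0 = 0 by rewrite add0r.
  by apply: (grading_disj gg gx0); rewrite -(addrK x1 x0); apply: gradingB.
suff -> : x1 = 0 by rewrite addr0.
by apply: (grading_disj gg _ gx1); rewrite -(addKr x0 x1) addrC; apply: gradingB.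
Qed.
End Grading.

Lemma ls_grading (F : fieldType) (V : lmodType F) (L : lieSuper V) : grading (ls_par L).
Proof. by split; [exact: ls_par0 | exact: ls_parD | exact: ls_decomp | exact: ls_disj]. Qed.

(** * Exterior pairings and the exterior center *)

Section Pairing.
Variables (F : fieldType) (V : lmodType F) (L : lieSuper V).
Variables (W : lmodType F) (g : bool -> W -> Prop) (h : V -> V -> W).
Hypothesis gg : grading g.
Hypothesis hl : forall (c : F) x x' y, h (c *: x + x') y = c *: h x y + h x' y.
Hypothesis hr : forall (c : F) x y y', h x (c *: y + y') = c *: h x y + h x y'.
Hypothesis hpar : forall a b x y, ls_par L a x -> ls_par L b y -> g (addb a b) (h x y).

Lemma pairing_components x0 x1 : ls_par L false x0 -> ls_par L true x1 ->
  (forall y, h (x0 + x1) y = 0) -> forall y, h x0 y = 0 /\ h x1 y = 0.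
Proof.
move=> px0 px1 hx y; have [y0 [y1 [py0 py1 ->]]] := ls_decomp L y.
have homog b y' : ls_par L b y' -> h x0 y' = 0 /\ h x1 y' = 0.
  move=> py'; apply: (grading_sum_eq0 gg (hpar px0 py') (hpar px1 py')).
  by rewrite -(linD (fun c x x' => hl c x x' y')) hx.
rewrite (linD (fun c => hr c x0)) (linD (fun c => hr c x1)).
by have [-> ->] := homog _ _ py0; have [-> ->] := homog _ _ py1; rewrite addr0.
Qed.
End Pairing.

Section Bracket.
Variables (F : fieldType) (V : lmodType F) (L : lieSuper V).
Local Notation br := (ls_br L).
Local Notation par := (ls_par L).

Let br_linl z (a : F) x y : br (a *: x + y) z = a *: br x z + br y z.
Proof. exact: ls_brDl. Qed.
Let br_linr z (a : F) x y : br z (a *: x + y) = a *: br z x + br z y.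
Proof. exact: ls_brDr. Qed.

Lemma brDl x y z : br (x + y) z = br x z + br y z.
Proof. exact: (linD (f := br^~ z) (br_linl z)). Qed.
Lemma brDr x y z : br z (x + y) = br z x + br z y.
Proof. exact: (linD (f := br z) (br_linr z)). Qed.
Lemma brZl (a : F) x z : br (a *: x) z = a *: br x z.
Proof. exact: (linZ (f := br^~ z) (br_linl z)). Qed.
Lemma brZr (a : F) x z : br z (a *: x) = a *: br z x.
Proof. exact: (linZ (f := br z) (br_linr z)). Qed.
Lemma brNl x z : br (- x) z = - br x z.
Proof. exact: (linN (f := br^~ z) (br_linl z)). Qed.
Lemma brNr x z : br z (- x) = - br z x.
Proof. exact: (linN (f := br z) (br_linr z)). Qed.
Lemma brBl x y z : br (x - y) z = br x z - br y z.
Proof. exact: (linB (f := br^~ z) (br_linl z)). Qed.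
Lemma brBr x y z : br z (x - y) = br z x - br z y.
Proof. exact: (linB (f := br z) (br_linr z)). Qed.

Lemma center_components z0 z1 : par false z0 -> par true z1 ->
  center L (z0 + z1) -> center L z0 /\ center L z1.
Proof.
move=> p0 p1 cz.
have := pairing_components (ls_grading L) (@ls_brDl _ _ L)
  (fun a x y y' => ls_brDr L a y y' x) (@ls_br_par _ _ L) p0 p1 cz.
by move=> c; split=> y; case: (c y).
Qed.

Lemma center_br_r z y : center L z -> br y z = 0.
Proof.
have [z0 [z1 [p0 p1 ->]]] := ls_decomp L z => /(center_components p0 p1) [c0 c1].
have [y0 [y1 [q0 q1 ->]]] := ls_decomp L y.
by rewrite !(brDl, brDr) (ls_skew q0 p0) (ls_skew q0 p1) (ls_skew q1 p0)
  (ls_skew q1 p1) !c0 !c1 !scaler0 !oppr0 !addr0.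
Qed.

Lemma jacobi_brl a a' b u u' v : par a u -> par a' u' -> par b v ->
  br (br u u') v = br u (br u' v) - ssgn F (a && a') *: br u' (br u v).
Proof.
move=> pu pu' pv; have J := ls_jacobi pu pu' pv.
rewrite (ls_skew pv pu) brNr brZr scalerN scalerA -scaleNr in J.
rewrite (ls_skew (ls_br_par pu pu') pv) (ssgn_solve J) scalerBr !scalerA opprB.
rewrite addrC -!scaleNr -[in RHS](scale1r (br u (br u' v))).
by apply: scale_eq2; sgn_tac.
Qed.

Lemma jacobi_brr a b b' u v v' : par a u -> par b v -> par b' v' ->
  br u (br v v') = ssgn F (b' && addb a b) *: br (br v' u) v
                   - ssgn F (a && b) *: br (br v u) v'.
Proof.
move=> pu pv pv'; have J := ls_jacobi pv' pu pv.
rewrite (ls_skew (ls_br_par pv' pu) pv) (ls_skew (ls_br_par pv pu) pv').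
rewrite (ls_skew pv pu) brNr brZr scalerN scalerA -scaleNr (ssgn_solve J).
rewrite scalerBr !scalerN !opprK !scalerA addrAC -scalerBl addrC -scaleNr.
rewrite -[in LHS](addr0 (br u (br v v'))) -[in LHS](scale1r (br u (br v v'))).
rewrite -[0 in LHS](scale0r (br v' (br u v))).
by apply: scale_eq2; sgn_tac.
Qed.
End Bracket.

Section ExteriorCenter.
Variables (F : fieldType) (V : lmodType F) (L : lieSuper V).
Local Notation br := (ls_br L).
Local Notation par := (ls_par L).

Lemma ext_center0 : ext_center L 0.
Proof.
by move=> y W M h [[hl _ _] _]; exact: (lin0 (f := h^~ y) (fun c x x' => hl c x x' y)).
Qed.

Lemma ext_center_components x0 x1 : par false x0 -> par true x1 ->
  ext_center L (x0 + x1) -> ext_center L x0 /\ ext_center L x1.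
Proof.
move=> p0 p1 hx.
suff c y W (M : lieSuper W) h : ext_pairing L M h -> h x0 y = 0 /\ h x1 y = 0.
  by split=> y W M h hh; case: (c y W M h hh).
move=> hh; have [[hl hr hpar] _] := hh.
by apply: (pairing_components (ls_grading M) hl hr hpar p0 p1) => y'; apply: hx hh.
Qed.

Hypothesis hF2 : 2 \notin [pchar F].

Lemma br_even_self x : par false x -> br x x = 0.
Proof.
move=> px; have two_x0 : 2%:R *: br x x = 0.
  by rewrite scaler_nat mulr2n {2}(ls_skew px px) /ssgn /= scale1r subrr.
have two_neq0 : (2%:R : F) != 0 by apply: contra hF2 => two0; rewrite inE /= two0.
by apply/eqP; move/eqP: two_x0; rewrite scaler_eq0 (negPf two_neq0).
Qed.

Lemma br_ext_pairing : ext_pairing L L br.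
Proof.
split; split.
- exact: ls_brDl.
- by move=> *; rewrite ls_brDr.
- by move=> a b x y; apply: ls_br_par.
- move=> a a' x x' y px px'; have [y0 [y1 [py0 py1 ->]]] := ls_decomp L y.
  rewrite !(brDl, brDr) (jacobi_brl px px' py0) (jacobi_brl px px' py1) scalerDr.
  by rewrite opprD addrACA.
- by move=> a b b' x y y' px py py'; apply: jacobi_brr.
- by move=> a b a' b' x y x' y' px py _ _; rewrite (ls_skew px py) brNl brZl.
- by move=> a b x y px py; rewrite (ls_skew px py) addNr.
- exact: br_even_self.
Qed.

Lemma ext_center_sub_center x : ext_center L x -> center L x.
Proof. by move=> hx y; apply: hx br_ext_pairing. Qed.

Lemma ext_center_graded_ideal : graded_ideal L (ext_center L).
Proof.
split.
- exact: ext_center0.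
- move=> a x y hx hy z W M h hh; have [[hl _ _] _] := hh.
  by rewrite hl (hx z _ _ _ hh) (hy z _ _ _ hh) scaler0 addr0.
- move=> x hx; have [x0 [x1 [p0 p1 ex]]] := ls_decomp L x.
  have [] := ext_center_components p0 p1; first by rewrite -ex.
  by exists x0, x1.
- move=> x y /ext_center_sub_center cx.
  by rewrite cx (center_br_r _ cx); split; apply: ext_center0.
Qed.
End ExteriorCenter.

(** * Capable quotients contain the exterior center *)

Section HomPairing.
Variables (F : fieldType) (V WQ : lmodType F) (L : lieSuper V) (Q : lieSuper WQ).
Variable p : V -> WQ.
Hypothesis phom : is_hom L Q p.

Lemma ext_pairing_hom (W : lmodType F) (M : lieSuper W) h :
  ext_pairing Q M h -> ext_pairing L M (fun x y => h (p x) (p y)).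
Proof.
have [plin ppar pbr] := phom.
move=> [[hl hr hpar] [hbrl hbrr hbrbr hskew hself]]; split; split.
- by move=> c x x' y; rewrite plin hl.
- by move=> c x y y'; rewrite plin hr.
- by move=> a b x y px py; apply: hpar; apply: ppar.
- by move=> a a' x x' y px px'; rewrite !pbr; apply: hbrl; apply: ppar.
- by move=> a b b' x y y' px py py'; rewrite !pbr; apply: hbrr; apply: ppar.
- move=> a b a' b' x y x' y' px py px' py'; rewrite !pbr.
  by apply: (hbrbr _ _ a' b'); apply: ppar.
- by move=> a b x y px py; apply: hskew; apply: ppar.
- by move=> x px; apply: hself; apply: ppar.
Qed.

Lemma ext_center_hom x : surj p -> ext_center L x -> ext_center Q (p x).
Proof.
move=> psurj hx q W M h hh; have [y <-] := psurj q.
exact: hx y _ _ _ (ext_pairing_hom hh).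
Qed.
End HomPairing.

Section SurjLift.
Variables (A B : Type) (f : A -> B) (fsurj : surj f).

Definition surj_lift b : A := proj1_sig (constructive_indefinite_description _ (fsurj b)).

Lemma surj_liftK b : f (surj_lift b) = b.
Proof. exact: proj2_sig (constructive_indefinite_description _ (fsurj b)). Qed.
End SurjLift.

Section HomLift.
Variables (F : fieldType) (WH WQ : lmodType F) (H : lieSuper WH) (Q : lieSuper WQ).
Variable f : WH -> WQ.
Hypotheses (fhom : is_hom H Q f) (fsurj : surj f).

Lemma hom_lift_par a q : ls_par Q a q -> exists u, ls_par H a u /\ f u = q.
Proof.
have [flin fpar _] := fhom; have [u0 <-] := fsurj q.
have [u [u' [pu pu' ->]]] := ls_decomp H u0.
rewrite (linD flin).
move=> /(grading_component (ls_grading Q) (fpar _ _ pu) (fpar _ _ pu')) ->.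
by exists (if a then u' else u); case: a.
Qed.
End HomLift.

Section CapableLift.
Variables (F : fieldType) (hF2 : 2 \notin [pchar F]).
Variables (WH WQ : lmodType F) (H : lieSuper WH) (Q : lieSuper WQ) (f : WH -> WQ).
Hypotheses (fhom : is_hom H Q f) (fsurj : surj f) (fker : forall u, f u = 0 <-> center H u).
Local Notation brH := (ls_br H).

Lemma br_fiber u u' v v' : f u = f u' -> f v = f v' -> brH u v = brH u' v'.
Proof.
have [flin _ _] := fhom.
have central w w' : f w = f w' -> center H (w - w').
  by move=> e; apply/fker; rewrite (linB flin) e subrr.
move=> /central cu /central cv.
by rewrite -(subrK u' u) brDl cu add0r -(subrK v' v) brDr (center_br_r _ cv) add0r.
Qed.

Definition lifted_br q q' := brH (surj_lift fsurj q) (surj_lift fsurj q').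

Lemma lifted_brE q q' u v : f u = q -> f v = q' -> lifted_br q q' = brH u v.
Proof. by move=> fu fv; apply: br_fiber; rewrite surj_liftK. Qed.

Lemma lifted_br_ext_pairing : ext_pairing Q H lifted_br.
Proof.
have [flin _ fbr] := fhom.
have [[_ _ _] [hbrl hbrr hbrbr hskew hself]] := br_ext_pairing H hF2.
have brE u v : lifted_br (f u) (f v) = brH u v by exact: lifted_brE.
have lift_par := hom_lift_par fhom fsurj.
split; split.
- move=> c q q' y; have [u <-] := fsurj q; have [u' <-] := fsurj q'.
  by have [w <-] := fsurj y; rewrite -flin !brE ls_brDl.
- move=> c y q q'; have [u <-] := fsurj q; have [u' <-] := fsurj q'.
  by have [w <-] := fsurj y; rewrite -flin !brE ls_brDr.
- move=> a b q q' /lift_par [u [pu <-]] /lift_par [v [pv <-]].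
  by rewrite brE; apply: ls_br_par.
- move=> a a' q q' y /lift_par [u [pu <-]] /lift_par [u' [pu' <-]].
  by have [w <-] := fsurj y; rewrite -!fbr !brE; apply: hbrl.
- move=> a b b' q y y' /lift_par [u [pu <-]] /lift_par [v [pv <-]].
  by move=> /lift_par [v' [pv' <-]]; rewrite -!fbr !brE; apply: hbrr.
- move=> a b a' b' q y q' y' /lift_par [u [pu <-]] /lift_par [v [pv <-]].
  move=> /lift_par [u' [pu' <-]] /lift_par [v' [pv' <-]].
  by rewrite -!fbr !brE; apply: (hbrbr _ _ a' b').
- move=> a b q q' /lift_par [u [pu <-]] /lift_par [v [pv <-]].
  by rewrite !brE; apply: hskew.
- by move=> q /lift_par [u [pu <-]]; rewrite brE; apply: hself.
Qed.
End CapableLift.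

Lemma capable_ext_center_eq0 (F : fieldType) (hF2 : 2 \notin [pchar F])
  (W : lmodType F) (Q : lieSuper W) q : capable Q -> ext_center Q q -> q = 0.
Proof.
move=> [WH [H [f [fhom fsurj fker]]]] hq.
rewrite -(surj_liftK fsurj q); apply/fker => u.
rewrite -(lifted_brE fhom fsurj fker (surj_liftK fsurj q) (erefl (f u))).
exact: hq _ _ _ _ (lifted_br_ext_pairing hF2 fhom fsurj fker).
Qed.

Lemma ext_center_sub_capable_quot (F : fieldType) (hF2 : 2 \notin [pchar F])
  (V : lmodType F) (L : lieSuper V) (J : V -> Prop) x :
  capable_quot L J -> ext_center L x -> J x.
Proof.
move=> [W [Q [p [phom psurj pker cQ]]]] hx; apply/pker.
apply: (capable_ext_center_eq0 hF2 cQ); exact: ext_center_hom hx.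
Qed.

(** * Graded cocycles and central extensions *)

Section Cocycle.
Variables (F : fieldType) (V : lmodType F) (L : lieSuper V).
Local Notation br := (ls_br L).
Local Notation par := (ls_par L).

Record cocycle (W : lmodType F) (g : bool -> W -> Prop) (c : V -> V -> W) : Prop :=
 Cocycle {
  cocycle_grading : grading g;
  cocycle_linl : forall (k : F) x x' y, c (k *: x + x') y = k *: c x y + c x' y;
  cocycle_linr : forall (k : F) x y y', c x (k *: y + y') = k *: c x y + c x y';
  cocycle_par : forall a b x y, par a x -> par b y -> g (addb a b) (c x y);
  cocycle_skew : forall a b x y, par a x -> par b y ->
    c x y + ssgn F (a && b) *: c y x = 0;
  cocycle_jacobi : forall a b d x y z, par a x -> par b y -> par d z ->
    ssgn F (a && d) *: c x (br y z) + ssgn F (b && a) *: c y (br z x)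
    + ssgn F (d && b) *: c z (br x y) = 0 }.

Definition radical (W : lmodType F) (c : V -> V -> W) x := forall y, c x y = 0.

Lemma ext_pairing_cocycle (W : lmodType F) (M : lieSuper W) h :
  ext_pairing L M h -> cocycle (ls_par M) h.
Proof.
move=> [[hl hr hpar] [hbrl _ _ hskew _]]; split=> //; first exact: ls_grading.
move=> a b d x y z px py pz.
have e := hskew _ _ _ _ pz (ls_br_par px py).
have -> : h z (br x y) = - (ssgn F (d && addb a b) *: h (br x y) z).
  by apply/eqP; rewrite -addr_eq0 e.
rewrite (hbrl _ _ _ _ z px py) (ls_skew pz px).
rewrite (linN (fun k => hr k y)) (linZ (fun k => hr k y)).
rewrite !(scalerN, scalerBr, scalerA, opprB) [_ - _ *: h x _]addrC addrACA.
by rewrite -!scaleNr -!scalerDl; apply: scale2_eq0; sgn_tac.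
Qed.

Definition pair_grading (W1 W2 : lmodType F) (g1 : bool -> W1 -> Prop)
  (g2 : bool -> W2 -> Prop) b (w : W1 * W2) := g1 b w.1 /\ g2 b w.2.

Lemma grading_pair (W1 W2 : lmodType F) g1 g2 :
  grading g1 -> grading g2 -> grading (@pair_grading W1 W2 g1 g2).
Proof.
move=> [g10 g1P g1dec g1disj] [g20 g2P g2dec g2disj]; split.
- by move=> b; split; [apply: g10 | apply: g20].
- by move=> b a x y [? ?] [? ?]; split; [apply: g1P | apply: g2P].
- move=> [x1 x2]; have [u0 [u1 [? ? ->]]] := g1dec x1.
  by have [v0 [v1 [? ? ->]]] := g2dec x2; exists (u0, v0), (u1, v1); split.
- by move=> [x1 x2] [/= ? ?] [/= ? ?]; rewrite (g1disj x1) // (g2disj x2).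
Qed.

Definition pair_pairing (W1 W2 : lmodType F) (c1 : V -> V -> W1) (c2 : V -> V -> W2)
  x y : W1 * W2 := (c1 x y, c2 x y).

Lemma cocycle_pair (W1 W2 : lmodType F) g1 g2 (c1 : V -> V -> W1) (c2 : V -> V -> W2) :
  cocycle g1 c1 -> cocycle g2 c2 -> cocycle (pair_grading g1 g2) (pair_pairing c1 c2).
Proof.
move=> [gr1 l1 r1 p1 s1 j1] [gr2 l2 r2 p2 s2 j2]; split.
- exact: grading_pair.
- by move=> k x x' y; rewrite /pair_pairing l1 l2.
- by move=> k x y y'; rewrite /pair_pairing r1 r2.
- by move=> a b x y px py; split; [apply: p1 | apply: p2].
- move=> a b x y px py.
  by apply: (congr2 pair (s1 _ _ _ _ px py) (s2 _ _ _ _ px py)).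
- move=> a b d x y z px py pz.
  exact: (congr2 pair (j1 _ _ _ _ _ _ px py pz) (j2 _ _ _ _ _ _ px py pz)).
Qed.

Lemma radical_pair (W1 W2 : lmodType F) (c1 : V -> V -> W1) (c2 : V -> V -> W2) x :
  radical (pair_pairing c1 c2) x <-> radical c1 x /\ radical c2 x.
Proof.
split=> [r | [r1 r2] y]; last by rewrite /pair_pairing r1 r2.
by split=> y; [exact: (congr1 fst (r y)) | exact: (congr1 snd (r y))].
Qed.
End Cocycle.

Section CentralExtension.
Variables (F : fieldType) (V : lmodType F) (L : lieSuper V).
Variables (W : lmodType F) (g : bool -> W -> Prop) (c : V -> V -> W).
Hypothesis gc : cocycle L g c.
Local Notation br := (ls_br L).
Local Notation par := (ls_par L).

Let cext_grading := grading_pair (ls_grading L) (cocycle_grading gc).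

Definition cext_br (u v : V * W) : V * W := (br u.1 v.1, c u.1 v.1).

Lemma cext_brDl (a : F) u v w : cext_br (a *: u + v) w = a *: cext_br u w + cext_br v w.
Proof. exact (congr2 pair (ls_brDl L a u.1 v.1 w.1) (cocycle_linl gc a u.1 v.1 w.1)). Qed.

Lemma cext_brDr (a : F) u v w : cext_br w (a *: u + v) = a *: cext_br w u + cext_br w v.
Proof. exact (congr2 pair (ls_brDr L a u.1 v.1 w.1) (cocycle_linr gc a w.1 u.1 v.1)). Qed.

Lemma cext_br_par a b u v : pair_grading par g a u -> pair_grading par g b v ->
  pair_grading par g (addb a b) (cext_br u v).
Proof.
by move=> [pu1 pu2] [pv1 pv2]; split; [apply: ls_br_par | apply: (cocycle_par gc)].
Qed.

Lemma cext_skew a b u v : pair_grading par g a u -> pair_grading par g b v ->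
  cext_br u v = - (ssgn F (a && b) *: cext_br v u).
Proof.
move=> [pu1 _] [pv1 _].
have skew2 : c u.1 v.1 = - (ssgn F (a && b) *: c v.1 u.1).
  by apply/eqP; rewrite -addr_eq0 (cocycle_skew gc pu1 pv1).
exact (congr2 pair (ls_skew pu1 pv1) skew2).
Qed.

Lemma cext_jacobi a b d u v w : pair_grading par g a u -> pair_grading par g b v ->
  pair_grading par g d w ->
    ssgn F (a && d) *: cext_br u (cext_br v w)
  + ssgn F (b && a) *: cext_br v (cext_br w u)
  + ssgn F (d && b) *: cext_br w (cext_br u v) = 0.
Proof.
move=> [pu _] [pv _] [pw _].
exact (congr2 pair (ls_jacobi pu pv pw) (cocycle_jacobi gc pu pv pw)).
Qed.

Definition cext : lieSuper (V * W)%type :=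
  LieSuper (grading0 cext_grading) (gradingP cext_grading) (grading_decomp cext_grading)
    (grading_disj cext_grading) cext_brDl cext_brDr cext_br_par cext_skew cext_jacobi.

Lemma center_cext u : center cext u <-> center L u.1 /\ radical c u.1.
Proof.
split=> [cu | [cu1 ru1] v]; last exact (congr2 pair (cu1 v.1) (ru1 v.1)).
by split=> y; [exact (congr1 fst (cu (y, 0))) | exact (congr1 snd (cu (y, 0)))].
Qed.
End CentralExtension.

(** * The quotient by the exterior center is capable *)

Section FiniteDimension.
Variables (F : fieldType) (V : vectType F).

Lemma dimvS_lt (U U' : {vspace V}) x :
  (U <= U')%VS -> x \in U' -> x \notin U -> (\dim U < \dim U')%N.
Proof.
move=> sUU' xU' xNU; rewrite (ltn_leqif (dimv_leqif_sup sUU')).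
by apply: contra xNU => /subvP; apply.
Qed.

Lemma vspace_of_pred (P : V -> Prop) : P 0 ->
  (forall (a : F) x y, P x -> P y -> P (a *: x + y)) ->
  exists U : {vspace V}, forall x, x \in U <-> P x.
Proof.
move=> P0 PP; suff grow n (U : {vspace V}) : (forall x, x \in U -> P x) ->
    (\dim {:V} - \dim U <= n)%N -> exists U' : {vspace V}, forall x, x \in U' <-> P x.
  by apply: (grow _ 0%VS) => // x; rewrite memv0 => /eqP ->.
elim: n U => [|n IH] U UP dimU.
  have /eqP UT : U == fullv by rewrite eqEdim subvf /=; lia.
  by exists U => x; split=> [/UP // | _]; rewrite UT memvf.
case: (classic (forall x, P x -> x \in U)) => [PU | /not_all_ex_not [x]].
  by exists U => x; split; [apply: UP | apply: PU].
move=> nPU; have [Px /negP xNU] := imply_to_and _ _ nPU.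
apply: (IH (U + <[x]>)%VS).
  move=> z /memv_addP [u uU [v /vlineP [k ->] ->]].
  by rewrite addrC; apply: PP Px (UP u uU).
have := dimvS_lt (addvSl U <[x]>) (subvP (addvSr U _) _ (memv_line x)) xNU.
have := dimvS (subvf (U + <[x]>)); lia.
Qed.
End FiniteDimension.

Section UniversalCocycle.
Variables (F : fieldType) (hF2 : 2 \notin [pchar F]) (V : vectType F) (L : lieSuper V).

Lemma radical_vspace (W : lmodType F) g (c : V -> V -> W) : cocycle L g c ->
  exists U : {vspace V}, forall x, x \in U <-> radical c x.
Proof.
move=> gc; apply: vspace_of_pred => [y | a x x' rx rx' y].
  exact: (lin0 (f := c^~ y) (fun k x x' => cocycle_linl gc k x x' y)).
by rewrite (cocycle_linl gc) rx rx' scaler0 addr0.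
Qed.

Lemma radical_shrink (W : lmodType F) g (c : V -> V -> W) x : cocycle L g c ->
  (forall z, ext_center L z -> radical c z) -> ~ ext_center L x ->
  exists (W' : lmodType F) (g' : bool -> W' -> Prop) (c' : V -> V -> W'),
    [/\ cocycle L g' c', forall z, ext_center L z -> radical c' z,
        forall z, radical c' z -> radical c z & ~ radical c' x].
Proof.
move=> gc kc /not_all_ex_not [y /not_all_ex_not [W' /not_all_ex_not [M]]].
move=> /not_all_ex_not [h nh]; have [hh hxy] := imply_to_and _ _ nh.
exists _, (pair_grading g (ls_par M)), (pair_pairing c h); split.
- exact: cocycle_pair gc (ext_pairing_cocycle hh).
- by move=> z hz; apply/radical_pair; split; [apply: kc | move=> y'; apply: hz hh].
- by move=> z /radical_pair [].
- by move=> /radical_pair [_ /(_ y)].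
Qed.

Lemma exists_cocycle_radical_ext_center :
  exists (W : lmodType F) (g : bool -> W -> Prop) (c : V -> V -> W),
    cocycle L g c /\ forall x, radical c x <-> ext_center L x.
Proof.
suff descent n (W : lmodType F) g (c : V -> V -> W) (U : {vspace V}) : cocycle L g c ->
    (forall x, ext_center L x -> radical c x) ->
    (forall x, x \in U <-> radical c x) -> (\dim U < n)%N ->
    exists (W : lmodType F) (g : bool -> W -> Prop) (c : V -> V -> W),
      cocycle L g c /\ forall x, radical c x <-> ext_center L x.
  have gbr := ext_pairing_cocycle (br_ext_pairing L hF2).
  have [U hU] := radical_vspace gbr.
  by apply: (descent _ _ _ _ U gbr) => // x hx y; apply: hx (br_ext_pairing L hF2).
elim: n W g c U => [//|n IH] W g c U gc kc hU ltUn.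
case: (classic (forall x, radical c x -> ext_center L x)) => [rc | /not_all_ex_not [x]].
  by exists W, g, c; split=> // x; split; [apply: rc | apply: kc].
move=> nx; have [rx nZx] := imply_to_and _ _ nx.
have [W' [g' [c' [gc' kc' rc'c nrc'x]]]] := radical_shrink gc kc nZx.
have [U' hU'] := radical_vspace gc'.
apply: (IH _ _ _ U' gc' kc' hU').
have: (\dim U' < \dim U)%N.
  apply: (dimvS_lt (x := x)); last by apply/negP=> /hU'.
    by apply/subvP=> z /hU' /rc'c /hU.
  exact/hU.
lia.
Qed.

Lemma capable_of_ker_ext_center (WQ : lmodType F) (Q : lieSuper WQ) (p : V -> WQ) :
  is_hom L Q p -> surj p -> (forall x, p x = 0 <-> ext_center L x) -> capable Q.
Proof.
move=> [plin ppar pbr] psurj pker.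
have [W [g [c [gc rc]]]] := exists_cocycle_radical_ext_center.
exists (V * W)%type, (cext gc), (fun u => p u.1); split.
- by split=> [a u v | b u [pu _] | u v]; [apply: plin | apply: ppar | apply: pbr].
- by move=> q; have [x <-] := psurj q; exists (x, 0).
- move=> u; rewrite center_cext pker -rc; split=> [ru | [] //].
  by split=> //; apply: (ext_center_sub_center hF2); apply/rc.
Qed.
End UniversalCocycle.

(** * Quotients by graded ideals *)

Lemma linear_quotient (F : fieldType) (V : vectType F) (P : V -> Prop) : P 0 ->
  (forall (a : F) x y, P x -> P y -> P (a *: x + y)) ->
  exists (W : lmodType F) (p : V -> W),
    [/\ forall (a : F) x y, p (a *: x + y) = a *: p x + p y, surj p
      & forall x, p x = 0 <-> P x].
Proof.
move=> P0 PP; have [U hU] := vspace_of_pred P0 PP.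
pose p x := vsproj U^C (x - projv U x).
have pK x : vsval (p x) = x - projv U x by rewrite vsprojK ?memv_projC.
exists (subvs_of U^C), p; split.
- move=> a x y; apply: subvs_inj; rewrite linearP /= !pK linearP /= scalerBr.
  by rewrite opprD addrACA.
- move=> w; exists (vsval w); apply: subvs_inj; rewrite pK.
  have /eqP -> : projv U (vsval w) == 0 by rewrite -memv_ker lker_proj subvsP.
  by rewrite subr0.
- move=> x; rewrite -hU; split=> [/(congr1 vsval) | xU]; last first.
    by apply: subvs_inj; rewrite pK projv_id ?subrr ?linear0.
  by rewrite pK linear0 => /eqP; rewrite subr_eq0 => /eqP ->; apply: memv_proj.
Qed.

Section QuotientLie.
Variables (F : fieldType) (V W : lmodType F) (L : lieSuper V) (I : V -> Prop).
Variable p : V -> W.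
Hypotheses (plin : forall (a : F) x y, p (a *: x + y) = a *: p x + p y) (psurj : surj p).
Hypotheses (pker : forall x, p x = 0 <-> I x) (hI : graded_ideal L I).
Local Notation br := (ls_br L).
Local Notation par := (ls_par L).

Definition quot_par b w := exists x, par b x /\ p x = w.
Definition quot_br w w' := p (br (surj_lift psurj w) (surj_lift psurj w')).

Lemma quot_eq_ideal x y : p x = p y -> I (x - y).
Proof. by move=> e; apply/pker; rewrite (linB plin) e subrr. Qed.

Lemma quot_br_congr x x' y y' : p x = p x' -> p y = p y' -> p (br x y) = p (br x' y').
Proof.
have [_ ID _ Ibr] := hI.
move=> /quot_eq_ideal /(Ibr _ y) [Ix _] /quot_eq_ideal /(Ibr _ x') [_ Iy].
apply/eqP; rewrite -subr_eq0 -(linB plin) -(subrK (br x' y) (br x y)) -addrA.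
rewrite -brBl -brBr.
by apply/eqP/pker; have := ID 1 _ _ Ix Iy; rewrite scale1r.
Qed.

Lemma quot_brE x y : quot_br (p x) (p y) = p (br x y).
Proof. by apply: quot_br_congr; rewrite surj_liftK. Qed.

Lemma quot_par0 b : quot_par b 0.
Proof. by exists 0; rewrite (lin0 plin); split=> //; apply: ls_par0. Qed.

Lemma quot_parD b (a : F) w w' :
  quot_par b w -> quot_par b w' -> quot_par b (a *: w + w').
Proof.
move=> [x [px <-]] [y [py <-]]; exists (a *: x + y).
by split; [apply: ls_parD | apply: plin].
Qed.

Lemma quot_decomp w : exists w0 w1, [/\ quot_par false w0, quot_par true w1 & w = w0 + w1].
Proof.
have [v <-] := psurj w; have [x0 [x1 [p0 p1 ->]]] := ls_decomp L v.
by exists (p x0), (p x1); split; [exists x0 | exists x1 | apply: (linD plin)].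
Qed.

Lemma quot_disj w : quot_par false w -> quot_par true w -> w = 0.
Proof.
move=> [x0 [p0 <-]] [x1 [p1 e]]; apply/pker.
have [_ _ Idec _] := hI.
have [i0 [i1 [Ii0 Ii1 q0 q1 ei]]] := Idec _ (quot_eq_ideal e).
have e' : x0 + i0 = x1 - i1 by rewrite -[x1](subrK x0) ei addrAC addrK addrC.
have x0i0 : x0 + i0 = 0.
  apply: ls_disj; first exact: (gradingD (ls_grading L)).
  by rewrite e'; apply: (gradingB (ls_grading L)).
have [I0 ID _ _] := hI.
by rewrite -(addrK i0 x0) x0i0 sub0r -scaleN1r -[_ *: i0]addr0; apply: ID.
Qed.

Lemma quot_brDl (a : F) w w' z :
  quot_br (a *: w + w') z = a *: quot_br w z + quot_br w' z.
Proof.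
have [x <-] := psurj w; have [y <-] := psurj w'; have [v <-] := psurj z.
by rewrite -plin !quot_brE ls_brDl plin.
Qed.

Lemma quot_brDr (a : F) w w' z :
  quot_br z (a *: w + w') = a *: quot_br z w + quot_br z w'.
Proof.
have [x <-] := psurj w; have [y <-] := psurj w'; have [v <-] := psurj z.
by rewrite -plin !quot_brE ls_brDr plin.
Qed.

Lemma quot_br_par a b w w' :
  quot_par a w -> quot_par b w' -> quot_par (addb a b) (quot_br w w').
Proof.
move=> [x [px <-]] [y [py <-]]; exists (br x y).
by split; [apply: ls_br_par | rewrite quot_brE].
Qed.

Lemma quot_skew a b w w' : quot_par a w -> quot_par b w' ->
  quot_br w w' = - (ssgn F (a && b) *: quot_br w' w).
Proof.
move=> [x [px <-]] [y [py <-]].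
by rewrite !quot_brE (ls_skew px py) (linN plin) (linZ plin).
Qed.

Lemma quot_jacobi a b c u v w : quot_par a u -> quot_par b v -> quot_par c w ->
    ssgn F (a && c) *: quot_br u (quot_br v w)
  + ssgn F (b && a) *: quot_br v (quot_br w u)
  + ssgn F (c && b) *: quot_br w (quot_br u v) = 0.
Proof.
move=> [x [px <-]] [y [py <-]] [z [pz <-]].
by rewrite !quot_brE -!(linZ plin) -!(linD plin) (ls_jacobi px py pz) (lin0 plin).
Qed.

Definition quot_lie : lieSuper W :=
  LieSuper quot_par0 quot_parD quot_decomp quot_disj quot_brDl quot_brDr
    quot_br_par quot_skew quot_jacobi.

Lemma quot_hom : is_hom L quot_lie p.
Proof. by split=> // [b x px | x y]; [exists x | rewrite /= quot_brE]. Qed.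
End QuotientLie.

Lemma graded_ideal_quotient (F : fieldType) (V : vectType F) (L : lieSuper V)
    (I : V -> Prop) : graded_ideal L I ->
  exists (W : lmodType F) (Q : lieSuper W) (p : V -> W),
    [/\ is_hom L Q p, surj p & forall x, p x = 0 <-> I x].
Proof.
move=> hI; have [I0 ID _ _] := hI.
have [W [p [plin psurj pker]]] := linear_quotient I0 ID.
by exists W, (quot_lie plin psurj pker hI), p; split=> //; apply: quot_hom.
Qed.

Unset Implicit Arguments. Set Strict Implicit.
Theorem mainTheorem8 (F : fieldType) (hF2 : 2 \notin [pchar F]) (hF3 : 3 \notin [pchar F])
    (V : vectType F) (L : lieSuper V) :
  is_epicenter L (ext_center L) /\
  (capable L <-> forall x, ext_center L x -> x = 0).
Proof.
have ZL := ext_center_graded_ideal L hF2.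
split; first split=> //.
- have [W [Q [p [phom psurj pker]]]] := graded_ideal_quotient ZL.
  by exists W, Q, p; split=> //; apply: (capable_of_ker_ext_center hF2 phom psurj pker).
- by move=> J _ cJ x; apply: (ext_center_sub_capable_quot hF2 cJ).
split=> [cL x | Z0]; first exact: (capable_ext_center_eq0 hF2 cL).
have idhom : is_hom L L id by split.
apply: (capable_of_ker_ext_center hF2 idhom) => [y | x]; first by exists y.
by split=> [-> | /Z0 //]; apply: ext_center0.
Qed.
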